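(* Let $\mathcal{X}$ be finite, $\mathcal{C}\subseteq\{\pm1\}^{\mathcal{X}}$ a concept class, and $\alpha\in(0,1)$. Suppose $\{\lambda_c\}_{c\in\mathcal{C}}$ and $\{\mu_c\}_{c\in\mathcal{C}}$ are families of distributions on $\mathcal{Z}=\mathcal{X}\times\{\pm1\}$ and $\pi$ is a distribution on $\mathcal{C}$ such that $$\Delta:=\mathbb{E}_{c\sim\pi}[L_{\lambda_c}(c)]>\frac{2\alpha}{1+\alpha},$$ and $L_{\mu_c}(c)=0$ for all $c\in\mathcal{C}$. Let $U\in\mathbb{R}^{\mathcal{C}\times\mathcal{Z}}$ have entries $u_{c,z}=\pi(c)(\lambda_c(z)-\mu_c(z))$. Then there exist families $\{\widetilde\lambda_c\}_{c\in\mathcal{C}}$, $\{\widetilde\mu_c\}_{c\in\mathcal{C}}$ of distributions on $\mathcal{Z}$ and a distribution $\widetilde\pi$ on $\mathcal{C}$ such that: 1. for all $c$ in the support of $\widetilde\pi$, $L_{\widetilde\lambda_c}(c)\ge \frac{C_0\,\alpha/(1+\alpha)}{\log((1+\alpha)/\alpha)}$, where $C_0>0$ is an absolute constant; 2. $L_{\widetilde\mu_c}(c)=0$ for all $c\in\mathcal{C}$; 3. the matrix $\widetilde U\in\mathbb{R}^{\mathcal{C}\times\mathcal{Z}}$ with entries $\widetilde u_{c,z}=\widetilde\pi(c)(\widetilde\lambda_c(z)-\widetilde\mu_c(z))$ satisfies $\gamma_2^*(\widetilde U)\le\frac{2\alpha\,\gamma_2^*(U)}{(1+\alpha)\Delt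a}$.
   Context: $L_{\mathcal{D}}(h)=\Pr_{(x,y)\sim\mathcal{D}}[h(x)\ne y]$. $\gamma_2(M)=\min\{\|R\|_{2\to\infty}\|A\|_{1\to2}:RA=M\}$ (max Euclidean row norm times max Euclidean column norm); $\gamma_2^*(N)=\max\{\sum_{i,j}m_{ij}n_{ij}:\gamma_2(M)\le1\}$ is its dual norm. *)

From mathcomp Require Import all_boot all_order all_algebra.
From mathcomp Require Import classical_sets reals exp.
Set Implicit Arguments. Unset Strict Implicit. Unset Printing Implicit Defensive.
Import Order.TTheory GRing.Theory Num.Theory.
Local Open Scope ring_scope.
Local Open Scope classical_set_scope.

(* Labels {+1,-1} are encoded by bool (true = +1, false = -1). *)
Definition is_distr (R : realType) (T : finType) (f : {ffun T -> R}) : Prop :=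
  (forall t, 0 <= f t) /\ \sum_(t : T) f t = 1.

Definition loss (R : realType) (X : finType) (D : {ffun (X * bool) -> R})
  (h : {ffun X -> bool}) : R :=
  \sum_(z : X * bool | h z.1 != z.2) D z.

Definition max_row_norm (R : realType) (I : finType) (k : nat)
  (Rm : I -> 'I_k -> R) : R :=
  \big[Num.max/0]_(i : I) Num.sqrt (\sum_(l < k) Rm i l ^+ 2).
Definition max_col_norm (R : realType) (J : finType) (k : nat)
  (Am : 'I_k -> J -> R) : R :=
  \big[Num.max/0]_(j : J) Num.sqrt (\sum_(l < k) Am l j ^+ 2).

(* gamma_2(M) = min { ||R||_{2->oo} ||A||_{1->2} : R A = M }, inner
   dimension arbitrary. *)
Definition gamma2 (R : realType) (I J : finType) (M : I -> J -> R) : R :=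
  inf [set v : R | exists (k : nat) (Rm : I -> 'I_k -> R) (Am : 'I_k -> J -> R),
         (forall i j, \sum_(l < k) Rm i l * Am l j = M i j) /\
         v = max_row_norm Rm * max_col_norm Am].

Definition gamma2_dual (R : realType) (I J : finType) (N : I -> J -> R) : R :=
  sup [set v : R | exists M : I -> J -> R, gamma2 M <= 1 /\
         v = \sum_(i : I) \sum_(j : J) M i j * N i j].

Definition Umat (R : realType) (X C : finType) (pi : {ffun C -> R})
  (lam mu : C -> {ffun (X * bool) -> R}) : C -> (X * bool) -> R :=
  fun c z => pi c * (lam c z - mu c z).

From mathcomp Require Import all_boot all_order all_algebra.
From mathcomp Require Import classical_sets reals exp boolp.
From mathcomp Require Import ring lra.
Set Implicit Arguments. Unset Strict Implicit. Unset Printing Implicit Defensive.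
Import Order.TTheory GRing.Theory Num.Theory.
Local Open Scope ring_scope.
Local Open Scope classical_set_scope.

(* Keep only the concepts whose loss is at least a threshold T, reweight them
   proportionally to pi(c) L(c), and replace lambda_c by the mixture of lambda_c
   and mu_c whose loss is exactly T.  Row c of U is then multiplied by T / W,
   where W is the pi-mass of the kept losses; since gamma_2 can only decrease
   when rows are scaled by factors in [0, 1], gamma_2^* grows by at most T / W.
   Markov's inequality gives W >= Delta - T, and the threshold
   T = a / (2 ln (1/a)) with a = alpha / (1 + alpha) satisfies T <= a, which
   yields T / W <= 2 a / Delta. *)

Section CauchySchwarz.
Variable R : realType.

Lemma sum_sqr_ge0 (k : nat) (x : 'I_k -> R) : 0 <= \sum_(l < k) x l ^+ 2.
Proof. by apply: sumr_ge0 => l _; exact: sqr_ge0. Qed.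

Lemma sqrt_sum_sqr_eq0 (k : nat) (x : 'I_k -> R) :
  Num.sqrt (\sum_(l < k) x l ^+ 2) = 0 -> forall l, x l = 0.
Proof.
move=> /eqP; rewrite sqrtr_eq0 => s_le0 l.
have s0 : \sum_(l < k) x l ^+ 2 = 0 by apply/le_anti; rewrite s_le0 sum_sqr_ge0.
apply/eqP; rewrite -sqrf_eq0; apply/eqP.
by apply: (psumr_eq0P _ s0) => // i _; exact: sqr_ge0.
Qed.

Lemma sum_norm_mul_le (k : nat) (x y : 'I_k -> R) :
  \sum_(l < k) `|x l| * `|y l| <=
    Num.sqrt (\sum_(l < k) x l ^+ 2) * Num.sqrt (\sum_(l < k) y l ^+ 2).
Proof.
set p := Num.sqrt _; set q := Num.sqrt _.
have [p0|pnz] := eqVneq p 0.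
  by rewrite p0 mul0r big1 // => l _; rewrite (sqrt_sum_sqr_eq0 p0) normr0 mul0r.
have [q0|qnz] := eqVneq q 0.
  by rewrite q0 mulr0 big1 // => l _; rewrite (sqrt_sum_sqr_eq0 q0) normr0 mulr0.
have pp : 0 < p by rewrite lt_def pnz sqrtr_ge0.
have qp : 0 < q by rewrite lt_def qnz sqrtr_ge0.
(* Summing 2 p q |x_l| |y_l| <= q^2 x_l^2 + p^2 y_l^2 gives 2 p q S <= 2 p^2 q^2. *)
have amgm : (2 * p * q) * \sum_(l < k) `|x l| * `|y l| <=
     q ^+ 2 * \sum_(l < k) x l ^+ 2 + p ^+ 2 * \sum_(l < k) y l ^+ 2.
  rewrite !mulr_sumr -big_split /=; apply: ler_sum => l _.
  have := sqr_ge0 (q * `|x l| - p * `|y l|).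
  rewrite -[x l ^+ 2]real_normK ?num_real // -[y l ^+ 2]real_normK ?num_real //.
  by move=> h; nra.
rewrite -(ler_pM2l (_ : 0 < 2 * p * q)) ?mulr_gt0 //.
apply: (le_trans amgm); rewrite -(sqr_sqrtr (sum_sqr_ge0 x)).
by rewrite -(sqr_sqrtr (sum_sqr_ge0 y)) -/p -/q; nra.
Qed.

End CauchySchwarz.

Section Gamma2.
Variables (R : realType) (I J : finType).
Implicit Types (M N : I -> J -> R).

Definition factorization_costs M : set R :=
  [set v : R | exists (k : nat) (Rm : I -> 'I_k -> R) (Am : 'I_k -> J -> R),
         (forall i j, \sum_(l < k) Rm i l * Am l j = M i j) /\
         v = max_row_norm Rm * max_col_norm Am].

Lemma factorization_costs_ge0 M : lbound (factorization_costs M) 0.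
Proof.
by move=> v [k [Rm [Am [_ ->]]]]; apply: mulr_ge0; exact: bigmax_ge_id.
Qed.

Lemma factorization_costs_neq0 M : factorization_costs M !=set0.
Proof.
exists (max_row_norm (fun i (l : 'I_#|J|) => M i (enum_val l)) *
        max_col_norm (fun (l : 'I_#|J|) j => ((enum_val l == j)%:R : R))).
do 3 eexists; split; last reflexivity.
move=> i j; rewrite (bigD1 (enum_rank j)) //= enum_rankK eqxx mulr1.
rewrite big1 ?addr0 // => l hl.
case: eqP => [e|]; last by rewrite mulr0.
by move: hl; rewrite -e enum_valK eqxx.
Qed.

Lemma entry_le_gamma2 M i j : `|M i j| <= gamma2 M.
Proof.
apply: lb_le_inf; first exact: factorization_costs_neq0.
move=> v [k [Rm [Am [HM ->]]]].
rewrite -HM; apply: le_trans (ler_norm_sum _ _ _) _.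
under eq_bigr do rewrite normrM.
apply: le_trans (sum_norm_mul_le (Rm i) (Am^~ j)) _.
apply: ler_pM; try exact: sqrtr_ge0.
  exact: (le_bigmax _ (fun i => Num.sqrt (\sum_(l < k) Rm i l ^+ 2))).
exact: (le_bigmax _ (fun j => Num.sqrt (\sum_(l < k) Am l j ^+ 2))).
Qed.

Lemma gamma2_scale_rows M (e : I -> R) :
  (forall i, 0 <= e i <= 1) -> gamma2 (fun i j => e i * M i j) <= gamma2 M.
Proof.
move=> e01; apply: lb_le_inf; first exact: factorization_costs_neq0.
move=> v [k [Rm [Am [HM ->]]]].
apply: (@le_trans _ _ (max_row_norm (fun i l => e i * Rm i l) * max_col_norm Am)).
  apply: ge_inf; first by exists 0; exact: factorization_costs_ge0.
  do 3 eexists; split; last reflexivity.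
  by move=> i j; rewrite -HM mulr_sumr; apply: eq_bigr => l _; rewrite mulrA.
apply: ler_wpM2r; first exact: bigmax_ge_id.
apply: bigmax_le => [|i _]; first exact: bigmax_ge_id.
apply: le_trans (le_bigmax _ (fun i => Num.sqrt (\sum_(l < k) Rm i l ^+ 2)) i).
rewrite ler_sqrt ?sum_sqr_ge0 //.
under eq_bigr do rewrite exprMn.
rewrite -mulr_sumr; have /andP[e0 e1] := e01 i.
have e2 : e i ^+ 2 <= 1 by nra.
have := sum_sqr_ge0 (Rm i); nra.
Qed.

Lemma gamma2_zero_le0 : gamma2 (fun (_ : I) (_ : J) => 0 : R) <= 0.
Proof.
apply: ge_inf; first by exists 0; exact: factorization_costs_ge0.
exists 0%N, (fun _ _ => 0), (fun _ _ => 0); split.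
  by move=> i j; rewrite big_ord0.
rewrite /max_row_norm /max_col_norm; under eq_bigr do rewrite big_ord0 sqrtr0.
by rewrite big1_idem ?mul0r //= maxxx.
Qed.

Definition dual_pairings N : set R :=
  [set v : R | exists M, gamma2 M <= 1 /\ v = \sum_(i : I) \sum_(j : J) M i j * N i j].

Lemma zero_in_dual_pairings N : dual_pairings N 0.
Proof.
exists (fun _ _ => 0); split; first exact: le_trans gamma2_zero_le0 ler01.
by rewrite big1 // => i _; rewrite big1 // => j _; rewrite mul0r.
Qed.

Lemma has_sup_dual_pairings N : has_sup (dual_pairings N).
Proof.
split; first by exists 0; exact: zero_in_dual_pairings.
exists (\sum_(i : I) \sum_(j : J) `|N i j|) => v [M [HM ->]].
apply: ler_sum => i _; apply: ler_sum => j _.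
apply: le_trans (real_ler_norm _) _; first exact: num_real.
rewrite normrM -{2}[`|N i j|]mul1r; apply: ler_wpM2r => //.
exact: le_trans (entry_le_gamma2 M i j) HM.
Qed.

Lemma gamma2_dual_ge0 N : 0 <= gamma2_dual N.
Proof. exact: sup_upper_bound (has_sup_dual_pairings N) _ (zero_in_dual_pairings N). Qed.

Lemma gamma2_dual_scale_rows N (d : I -> R) (t : R) :
  0 < t -> (forall i, 0 <= d i <= t) ->
  gamma2_dual (fun i j => d i * N i j) <= t * gamma2_dual N.
Proof.
move=> t0 d0t; apply: ge_sup; first by exists 0; exact: zero_in_dual_pairings.
move=> v [M [HM ->]].
have -> : \sum_(i : I) \sum_(j : J) M i j * (d i * N i j) =
   t * \sum_(i : I) \sum_(j : J) (d i / t * M i j) * N i j.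
  rewrite mulr_sumr; apply: eq_bigr => i _; rewrite mulr_sumr.
  by apply: eq_bigr => j _; field; rewrite gt_eqF.
rewrite ler_pM2l //; apply: (sup_upper_bound (has_sup_dual_pairings N)).
eexists; split; last reflexivity.
apply: le_trans HM; apply: gamma2_scale_rows => i.
have /andP[d0 dt] := d0t i.
by rewrite divr_ge0 ?ler_pdivrMr ?mul1r // ltW.
Qed.

End Gamma2.

Section Distributions.
Variable R : realType.

Definition mix (T : finType) (t : R) (D1 D2 : {ffun T -> R}) : {ffun T -> R} :=
  [ffun z => t * D1 z + (1 - t) * D2 z].

Lemma is_distr_mix (T : finType) (t : R) (D1 D2 : {ffun T -> R}) :
  0 <= t <= 1 -> is_distr D1 -> is_distr D2 -> is_distr (mix t D1 D2).
Proof.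
move=> /andP[t0 t1] [D1_ge0 D1_sum] [D2_ge0 D2_sum]; split.
  by move=> z; rewrite ffunE addr_ge0 // mulr_ge0 // subr_ge0.
under eq_bigr do rewrite ffunE.
by rewrite big_split /= -!mulr_sumr D1_sum D2_sum; ring.
Qed.

Lemma loss_mix (X : finType) (t : R) (D1 D2 : {ffun X * bool -> R}) h :
  loss (mix t D1 D2) h = t * loss D1 h + (1 - t) * loss D2 h.
Proof. by rewrite /loss; under eq_bigr do rewrite ffunE; rewrite big_split -!mulr_sumr. Qed.

Lemma loss_ge0 (X : finType) (D : {ffun X * bool -> R}) h : is_distr D -> 0 <= loss D h.
Proof. by case=> D_ge0 _; apply: sumr_ge0. Qed.

Definition tail_mass (C : finType) (pi : {ffun C -> R}) (l : C -> R) (T : R) : R :=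
  \sum_(c | T <= l c) pi c * l c.

Lemma expectation_le_tail_mass (C : finType) (pi : {ffun C -> R}) (l : C -> R) T :
  is_distr pi -> 0 <= T -> \sum_c pi c * l c <= tail_mass pi l T + T.
Proof.
move=> [pi_ge0 pi_sum] T0.
rewrite (bigID (fun c => T <= l c)) /= lerD2l.
apply: (@le_trans _ _ (\sum_(c | ~~ (T <= l c)) pi c * T)).
  by apply: ler_sum => c; rewrite -ltNge => /ltW; exact: ler_wpM2l.
rewrite [X in _ <= X](_ : T = \sum_c pi c * T); last by rewrite -mulr_suml pi_sum mul1r.
rewrite [X in _ <= X](bigID (fun c => ~~ (T <= l c))) /= lerDl.
by rewrite sumr_ge0 // => c _; rewrite mulr_ge0.
Qed.

End Distributions.

Section Truncation.
Variables (R : realType) (X C : finType) (cl : C -> {ffun X -> bool}).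
Variables (lam mu : C -> {ffun X * bool -> R}) (pi : {ffun C -> R}).
Hypotheses (lam_distr : forall c, is_distr (lam c)) (mu_distr : forall c, is_distr (mu c)).
Hypotheses (pi_distr : is_distr pi) (mu_loss0 : forall c, loss (mu c) (cl c) = 0).
Variable T : R.
Hypothesis T_gt0 : 0 < T.

Local Notation l c := (loss (lam c) (cl c)).
Local Notation W := (tail_mass pi (fun c => l c) T).
Hypothesis W_gt0 : 0 < W.

Definition trunc_pi : {ffun C -> R} := [ffun c => if T <= l c then pi c * l c / W else 0].

Definition trunc_lam c : {ffun X * bool -> R} :=
  if T <= l c then mix (T / l c) (lam c) (mu c) else lam c.

Lemma is_distr_trunc_pi : is_distr trunc_pi.
Proof.
have [pi_ge0 _] := pi_distr; split.
  move=> c; rewrite ffunE; case: ifP => // _.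
  by rewrite divr_ge0 ?mulr_ge0 ?loss_ge0 // ltW.
under eq_bigr do rewrite ffunE.
by rewrite -big_mkcond /= -mulr_suml mulfV // gt_eqF.
Qed.

Lemma is_distr_trunc_lam c : is_distr (trunc_lam c).
Proof.
rewrite /trunc_lam; case: ifP => // Tl.
have l_gt0 : 0 < l c by exact: lt_le_trans Tl.
apply: is_distr_mix => //.
by rewrite divr_ge0 ?(ltW T_gt0) ?(ltW l_gt0) //= ler_pdivrMr // mul1r.
Qed.

Lemma loss_trunc_lam c : trunc_pi c != 0 -> loss (trunc_lam c) (cl c) = T.
Proof.
rewrite /trunc_lam ffunE; case: ifP => [Tl _|]; last by rewrite eqxx.
have l_gt0 : 0 < l c by exact: lt_le_trans Tl.
by rewrite loss_mix mu_loss0 mulr0 addr0 mulfVK ?gt_eqF.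
Qed.

Lemma Umat_trunc :
  Umat trunc_pi trunc_lam mu =
    (fun c z => (if T <= l c then T / W else 0) * Umat pi lam mu c z).
Proof.
apply/funext => c; apply/funext => z.
rewrite /Umat /trunc_lam ffunE; case: ifP => Tl; last by rewrite !mul0r.
have l_gt0 : 0 < l c by exact: lt_le_trans Tl.
by rewrite ffunE; field; rewrite !gt_eqF.
Qed.

Lemma truncation :
  exists (lam' : C -> {ffun X * bool -> R}) (pi' : {ffun C -> R}),
    [/\ forall c, is_distr (lam' c), is_distr pi',
        forall c, pi' c != 0 -> loss (lam' c) (cl c) = T &
        gamma2_dual (Umat pi' lam' mu) <= T / W * gamma2_dual (Umat pi lam mu)].
Proof.
exists trunc_lam, trunc_pi; split.
- exact: is_distr_trunc_lam.
- exact: is_distr_trunc_pi.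
- exact: loss_trunc_lam.
rewrite Umat_trunc; apply: gamma2_dual_scale_rows; first by rewrite divr_gt0.
by move=> c; case: ifP => _; rewrite ?lexx // divr_ge0 ?ltW.
Qed.

End Truncation.

Lemma threshold_bounds (R : realType) (a : R) :
  0 < a <= 1/2 -> 0 < 1/2 * a / ln a^-1 <= a.
Proof.
move=> /andP[a0 a_le].
have ln_ge : 1/2 <= ln a^-1.
  rewrite lnV ?posrE //.
  have := @le_ln1Dx R (a - 1); rewrite addrCA subrr addr0 => h.
  have := h ltac:(lra); lra.
have ln_gt0 : 0 < ln a^-1 by lra.
apply/andP; split; first by apply: divr_gt0 => //; lra.
by rewrite ler_pdivrMr //; nra.
Qed.

Lemma tail_ratio_le (R : realType) (a T W Delta : R) :
  0 < T <= a -> 2 * a < Delta -> Delta <= W + T -> T / W <= 2 * a / Delta.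
Proof.
move=> /andP[T0 Ta] aDelta DeltaW.
have W0 : 0 < W by lra.
rewrite ler_pdivrMr // mulrAC ler_pdivlMr; last lra.
(* 2 a W >= 2 a (Delta - T) >= T Delta, the last step since Delta > 2 a >= 2 T. *)
have h1 : 0 <= (a - T) * (Delta - 2 * a) by apply: mulr_ge0; lra.
have h2 : 0 <= a * (W + T - Delta) by apply: mulr_ge0; lra.
have h3 : 0 <= (a - T) * a by apply: mulr_ge0; lra.
nra.
Qed.

Theorem lemma4p4 (R : realType) :
  exists C0 : R, 0 < C0 /\
  forall (X C : finType) (cl : C -> {ffun X -> bool}), injective cl ->
  forall alpha : R, 0 < alpha < 1 ->
  forall (lam mu : C -> {ffun (X * bool) -> R}) (pi : {ffun C -> R}),
    (forall c, is_distr (lam c)) -> (forall c, is_distr (mu c)) -> is_distr pi ->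
    let Delta := \sum_(c : C) pi c * loss (lam c) (cl c) in
    2 * alpha / (1 + alpha) < Delta ->
    (forall c, loss (mu c) (cl c) = 0) ->
    exists (lam' mu' : C -> {ffun (X * bool) -> R}) (pi' : {ffun C -> R}),
      (forall c, is_distr (lam' c)) /\ (forall c, is_distr (mu' c)) /\ is_distr pi' /\
          (forall c, pi' c != 0 ->
             C0 * (alpha / (1 + alpha)) / ln ((1 + alpha) / alpha)
               <= loss (lam' c) (cl c)) /\
          (forall c, loss (mu' c) (cl c) = 0) /\
          gamma2_dual (Umat pi' lam' mu')
            <= 2 * alpha * gamma2_dual (Umat pi lam mu) / ((1 + alpha) * Delta).
Proof.
exists (1/2); split; first by rewrite divr_gt0.
move=> X C cl _ alpha /andP[a0 a1] lam mu pi lam_distr mu_distr pi_distr Delta.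
rewrite -[2 * alpha / (1 + alpha)]mulrA -[(1 + alpha) / alpha]invf_div.
set a := alpha / (1 + alpha) => aDelta mu_loss0.
have a_bounds : 0 < a <= 1/2.
  by apply/andP; split; [apply: divr_gt0 | rewrite ler_pdivrMr]; lra.
have /andP[T0 Ta] := threshold_bounds a_bounds.
set T := 1/2 * a / ln a^-1 in T0 Ta *.
have markov := expectation_le_tail_mass (fun c => loss (lam c) (cl c)) pi_distr (ltW T0).
have W0 : 0 < tail_mass pi (fun c => loss (lam c) (cl c)) T by rewrite /Delta in aDelta; lra.
have [lam' [pi' [lam'_distr pi'_distr lam'_loss gamma_le]]] :=
  truncation lam_distr mu_distr pi_distr mu_loss0 T0 W0.
exists lam', mu, pi'; do !split => //.
  by move=> c /lam'_loss ->.
apply: (le_trans gamma_le).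
have -> : 2 * alpha * gamma2_dual (Umat pi lam mu) / ((1 + alpha) * Delta)
   = 2 * a / Delta * gamma2_dual (Umat pi lam mu).
  by rewrite /a; field; rewrite !gt_eqF //; lra.
apply: ler_wpM2r; first exact: gamma2_dual_ge0.
by apply: tail_ratio_le; rewrite ?T0 ?Ta.
Qed.
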